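(* Let $m\ge2$ and $G=CK(2m-1)$. There exists a set $B$ of $m$ edges of $G$ that has an edge in common with every simple Hamiltonian path of $G$.
   Context: $CK(2m-1)$ is the complete convex geometric graph on $2m-1$ points in convex position in the plane, labelled cyclically $0,\dots,2m-2$ (elements of $\mathbb{Z}_{2m-1}$), with all segments between vertices as edges. A simple Hamiltonian path is a path through all vertices whose edges pairwise do not cross. *)

From mathcomp Require Import all_boot.
Set Implicit Arguments. Unset Strict Implicit. Unset Printing Implicit Defensive.

(* Vertices of CK(n): 'I_n, points in convex position labelled cyclically
   0, ..., n-1.  Edges: all 2-element vertex sets (segments). *)

(* x lies strictly inside the arc between a and b (w.r.t. the linear order of
   labels, i.e. on one of the two sides of the chord ab). *)
Definition strictly_between n (a b x : 'I_n) : bool :=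
  (minn a b < x) && (x < maxn a b).

(* For points in convex position, the segments ab and cd cross iff their four
   endpoints are distinct and c, d lie on different sides of the chord ab. *)
Definition cross n (a b c d : 'I_n) : bool :=
  uniq [:: a; b; c; d] &&
  (strictly_between a b c != strictly_between a b d).

Definition path_edges n (p : seq 'I_n) : seq ('I_n * 'I_n) := zip p (behead p).

Definition simple_ham_path n (p : seq 'I_n) : bool :=
  [&& size p == n, uniq p &
      all2rel (fun e f : 'I_n * 'I_n => ~~ cross e.1 e.2 f.1 f.2) (path_edges p)].

Definition edge_of n (e : 'I_n * 'I_n) : {set 'I_n} := [set e.1; e.2].

From mathcomp Require Import all_boot zify.
Set Implicit Arguments. Unset Strict Implicit. Unset Printing Implicit Defensive.

(* The sides {i, i+1}, i < m, of the polygon meet every simple Hamiltonian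
   path.  A path on 2m-1 vertices cannot contain the m+1 vertices 0, ..., m
   without two of them being consecutive on it, so some path edge xy has
   x, y <= m.  Take a shortest path edge nested in the arc [x, y]: if it were
   not a side, the vertex just after its lower end would lie on a path edge
   which, as it cannot cross it, would be a shorter nested edge. *)

Lemma count_nonadjacent_le (T : Type) (a : pred T) (s : seq T) :
  ~~ has (fun e => a e.1 && a e.2) (zip s (behead s)) ->
  (count a s).*2 <= (size s).+1.
Proof.
(* An [a]-head forces an unselected successor, hence the slack [a x]. *)
have bound x t : ~~ has (fun e => a e.1 && a e.2) (zip (x :: t) t) ->
    (count a (x :: t)).*2 <= size (x :: t) + a x.
  elim: t x => [|y t IH] x /=; first by case: (a x).
  rewrite negb_or => /andP[nxy /IH]; move: nxy.
  by case: (a x); case ay: (a y) => /=; rewrite ?ay /=; lia.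
by case: s => [|x s] // /bound; case: (a x) => /=; lia.
Qed.

Lemma uniq_perm_enum (T : finType) (s : seq T) :
  uniq s -> size s = #|T| -> perm_eq s (enum T).
Proof.
move=> us sizes; apply: uniq_perm (enum_uniq T) _ => //.
by have [] := uniq_min_size us (fun x _ => mem_enum T x); rewrite ?sizes ?cardT.
Qed.

Lemma count_ord_leq n k :
  k < n -> count (fun i : 'I_n => i <= k) (enum 'I_n) = k.+1.
Proof.
move=> lt_kn; rewrite -(count_map val (leq^~ k)) val_enum_ord -size_filter.
by rewrite (filter_iota_leq 0 lt_kn) size_iota.
Qed.

Lemma path_edge_neq (T : eqType) (s : seq T) e :
  uniq s -> e \in zip s (behead s) -> e.1 != e.2.
Proof.
elim: s => [|x [|y s] IH] //= /andP[nx us].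
rewrite inE => /orP[/eqP -> /=|]; last exact: IH.
by apply: contraNneq nx => ->; rewrite inE eqxx.
Qed.

Lemma exists_incident_edge (T : eqType) (s : seq T) x :
  x \in s -> 1 < size s -> exists2 e, e \in zip s (behead s) & x \in [:: e.1; e.2].
Proof.
elim: s => [|y [|z s] IH] //= xs _.
have [->|nxy] := eqVneq x y; first by exists (y, z); rewrite !inE eqxx.
move: xs; rewrite inE (negbTE nxy) /=.
case: s IH => [|w s] IH xzs.
  by move: xzs; rewrite inE => /eqP ->; exists (y, z); rewrite !inE eqxx ?orbT.
have [e ez xe] := IH xzs isT.
by exists e; rewrite // inE ez orbT.
Qed.

Lemma noncrossing_within n (a b c d : 'I_n) :
  c != d -> strictly_between a b c || strictly_between a b d ->
  ~~ cross a b c d ->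
  (minn a b <= c <= maxn a b) && (minn a b <= d <= maxn a b).
Proof. by rewrite /cross /strictly_between /= !inE -!val_eqE /=; lia. Qed.

Definition edge_len n (e : 'I_n * 'I_n) : nat := maxn e.1 e.2 - minn e.1 e.2.

Definition nested n (f e : 'I_n * 'I_n) : bool :=
  (minn e.1 e.2 <= minn f.1 f.2) && (maxn f.1 f.2 <= maxn e.1 e.2).

Lemma ham_path_perm_enum n (p : seq 'I_n) :
  simple_ham_path p -> perm_eq p (enum 'I_n).
Proof. by case/and3P=> /eqP sp up _; apply: uniq_perm_enum; rewrite ?card_ord. Qed.

Lemma ham_path_edge_in_prefix n k (p : seq 'I_n) :
  k < n <= k.*2 -> simple_ham_path p ->
  exists2 e : 'I_n * 'I_n, e \in path_edges p & (e.1 <= k) && (e.2 <= k).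
Proof.
move=> /andP[lt_kn le_n2k] hp; have [/eqP sp _ _] := and3P hp; apply/hasP.
apply: contraLR le_n2k => /(count_nonadjacent_le (a := fun x : 'I_n => x <= k)).
by rewrite (permP (ham_path_perm_enum hp)) count_ord_leq // sp; lia.
Qed.

Lemma nested_shorter_edge n (p : seq 'I_n) (e : 'I_n * 'I_n) :
  simple_ham_path p -> e \in path_edges p -> 1 < edge_len e ->
  exists2 f : 'I_n * 'I_n, f \in path_edges p & nested f e && (edge_len f < edge_len e).
Proof.
move=> hp ep; rewrite /edge_len => len_gt1.
have [/eqP sp up /allrelP noX] := and3P hp.
have lt_cn : (minn e.1 e.2).+1 < n by have := ltn_ord e.1; have := ltn_ord e.2; lia.
pose c := Ordinal lt_cn.
have cp : c \in p by rewrite (perm_mem (ham_path_perm_enum hp)) mem_enum.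
have size_gt1 : 1 < size p by rewrite sp; lia.
have [f fp cf] := exists_incident_edge cp size_gt1.
have nf := path_edge_neq up fp.
have cin : strictly_between e.1 e.2 f.1 || strictly_between e.1 e.2 f.2.
  by move: cf; rewrite /strictly_between !inE -!val_eqE /=; lia.
exists f => //; have := noncrossing_within nf cin (noX e f ep fp); move: cf nf.
by rewrite /nested !inE -!val_eqE /=; lia.
Qed.

Lemma nested_unit_edge n (p : seq 'I_n) (e : 'I_n * 'I_n) :
  simple_ham_path p -> e \in path_edges p ->
  exists2 f : 'I_n * 'I_n, f \in path_edges p & nested f e && (edge_len f == 1).
Proof.
move=> hp; have [_ up _] := and3P hp.
have [d] := ubnP (edge_len e); elim: d e => // d IH e lt_len_d ep.
have len_gt0 : 0 < edge_len e.
  by have := path_edge_neq up ep; rewrite /edge_len -val_eqE /=; lia.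
have [len_le1|len_gt1] := leqP (edge_len e) 1.
  by exists e; rewrite // /nested !leqnn eqn_leq len_le1.
have [f fp /andP[fe lt_len_f]] := nested_shorter_edge hp ep len_gt1.
have [g gp /andP[gf g1]] := IH f (leq_trans lt_len_f lt_len_d) fp.
by exists g; rewrite // g1 andbT; move: gf fe; rewrite /nested; lia.
Qed.

Definition first_sides n k : {set {set 'I_n.+1}} :=
  [set [set inord i; inord i.+1] | i : 'I_k].

Section FirstSides.

Variables n k : nat.
Hypothesis le_kn : k <= n.

Lemma val_inord_side (i : 'I_k) :
  (inord i : 'I_n.+1) = i :> nat /\ (inord i.+1 : 'I_n.+1) = i.+1 :> nat.
Proof. by have := ltn_ord i; split; rewrite inordK //; lia. Qed.

Lemma card_first_sides : #|first_sides n k| = k.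
Proof.
rewrite card_imset ?card_ord // => i j eq_ij.
have ij : (inord i : 'I_n.+1) \in [set inord j; inord j.+1] by rewrite -eq_ij set21.
have ji : (inord j : 'I_n.+1) \in [set inord i; inord i.+1] by rewrite eq_ij set21.
have [vi vSi] := val_inord_side i; have [vj vSj] := val_inord_side j.
by move: ij ji; rewrite !inE -!val_eqE /= vi vSi vj vSj => ij ji; apply: ord_inj; lia.
Qed.

Lemma first_sides_card2 E : E \in first_sides n k -> #|E| = 2.
Proof.
case/imsetP=> i _ ->; have [vi vSi] := val_inord_side i.
by rewrite cards2 -val_eqE /= vi vSi ltn_eqF.
Qed.

Lemma first_sides_meet_ham_path (p : seq 'I_n.+1) :
  n < k.*2 -> simple_ham_path p ->
  exists2 e, e \in path_edges p & edge_of e \in first_sides n k.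
Proof.
move=> lt_n2k hp.
have bounds : k < n.+1 <= k.*2 by lia.
have [e ep ek] := ham_path_edge_in_prefix bounds hp.
have [f fp /andP[fe f1]] := nested_unit_edge hp ep.
have lt_fk : minn f.1 f.2 < k by move: ek fe f1; rewrite /nested /edge_len; lia.
exists f => //; apply/imsetP; exists (Ordinal lt_fk) => //.
have [vi vSi] := val_inord_side (Ordinal lt_fk).
apply/setP => x; move: f1 fe ek; rewrite /edge_len /nested /edge_of !inE -!val_eqE /=.
by rewrite vi vSi /=; lia.
Qed.

End FirstSides.

Theorem proposition2 (m : nat) (hm : 2 <= m) :
  exists B : {set {set 'I_(2 * m - 1)}},
    [/\ #|B| = m,
        (forall e, e \in B -> #|e| = 2) &
        (forall p : seq 'I_(2 * m - 1), simple_ham_path p ->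
           exists2 e, e \in path_edges p & edge_of e \in B)].
Proof.
have -> : 2 * m - 1 = (2 * m - 2).+1 by lia.
have le_m_n : m <= 2 * m - 2 by lia.
exists (first_sides (2 * m - 2) m); split.
- exact: card_first_sides le_m_n.
- exact: first_sides_card2 le_m_n.
- by move=> p; apply: first_sides_meet_ham_path le_m_n p _; lia.
Qed.
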